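(* Let $\psi(u,v)$ be a $C^2$ function on $\mathbb R^2$ and $g(x)=\psi(|x|^2,|x|_{-1}^2)$ for $x\in\mathbb R^N$. Then for every $\varepsilon>0$ and $x\in\mathbb R^N$, $$\widetilde{\mathcal L}^\varepsilon g(x)=\widetilde Lg(x)=2a\Big(\sum_\ell\lambda_\ell(1+\delta_\ell)x_\ell^2\,\partial_u^2\psi+2\sum_\ell(1+\delta_\ell)x_\ell^2\,\partial_u\partial_v\psi+\sum_\ell\tfrac1{\lambda_\ell}(1+\delta_\ell)x_\ell^2\,\partial_v^2\psi\Big)+\Big(a\sum_\ell\lambda_\ell(1+\delta_\ell)-2\sum_\ell\lambda_\ell x_\ell^2\Big)\partial_u\psi+\Big(a\sum_\ell(1+\delta_\ell)-2\sum_\ell x_\ell^2\Big)\partial_v\psi,$$ with derivatives of $\psi$ evaluated at $(u,v)=(|x|^2,|x|_{-1}^2)$. Moreover, if $g_0(x)=\exp\{|x|_{-1}^2/(2a)\}$, then for every $\varepsilon>0$ and $x\in\mathbb R^N$, $$\widetilde{\mathcal L}^\varepsilon g_0(x)\le-\frac{aN-|x|^2}{2a}\,e^{|x|_{-1}^2/2a}\le\frac N2e^{N/2}.$$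
   Context: Let $n\ge4$, $N=2n$, $1=\lambda_1=\lambda_2<\lambda_3=\lambda_4<\dots<\lambda_{N-1}=\lambda_N$. On $\mathbb R^N$: $\langle x,y\rangle=\sum x_\ell y_\ell$, $|x|^2=\sum x_\ell^2$, $\langle x,y\rangle_{-1}=\sum x_\ell y_\ell/\lambda_\ell$, $|x|_{-1}^2=\sum x_\ell^2/\lambda_\ell$. Fix $a>0$, $\delta_\ell\in(-1,0]$ with $\delta_{2i}=\delta_{2i-1}$, and $\widetilde L=\sum_\ell\lambda_\ell(\tfrac a2(1+\delta_\ell)\partial_\ell^2-x_\ell\partial_\ell)$. Let $b$ be a vector field on $\mathbb R^N$ with each $b(x)_\ell$ a quadratic form in $x$, $\operatorname{div}b=0$, $\langle x,b(x)\rangle=0=\langle x,b(x)\rangle_{-1}$ for all $x$; $B=\sum b(x)_\ell\partial_\ell$. With $\mathcal J$ the set of triples $J=(k,\ell,m)$ in $\{1,\dots,N\}$ with $\lambda_k<\lambda_\ell<\lambda_m$, let $T_J=\sum x_ax_b(1/\lambda_a-1/\lambda_b)\partial_c$ (sum over the three cyclic permutations $(a,b,c)$ of $J$), and $R_i=x_{2i}\partial_{2i-1}-x_{2i-1}\partial_{2i}$, $1\le i\le n$; enumerate these vector fields as $Z_1,\dots,Z_M$ and set $\mathcal D=\frac12\sum_mZ_m^2$. Fix $\kappa\in(0,1]$, and for $\varepsilon>0$ set $\widetilde{\mathcal L}^\varepsilon=\widetilde L+\varepsilon^{-1}(B+\kappa\mathcal D)$. *)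

(* R : realType, vectors of R^m are
   row vectors 'rV[R]_m, partial derivatives are directional derivatives
   along the canonical basis vectors 'e_l = delta_mx 0 l. *)
From mathcomp Require Import all_boot all_order all_algebra.
From mathcomp Require Import all_classical all_reals all_analysis.
Set Implicit Arguments.
Unset Strict Implicit.
Unset Printing Implicit Defensive.
Import Order.TTheory GRing.Theory Num.Theory numFieldNormedType.Exports.
Local Open Scope ring_scope.

Section Defs.
Variable R : realType.

Definition xcomp (m : nat) (x : 'rV[R]_m) (l : 'I_m) : R := x ord0 l.

Definition pd (m : nat) (f : 'rV[R]_m -> R) (l : 'I_m) : 'rV[R]_m -> R :=
  fun x => 'D_('e_l) f x.

Definition sqn (m : nat) (x : 'rV[R]_m) : R := \sum_(l < m) xcomp x l ^+ 2.
Definition sqnm1 (m : nat) (lam : 'I_m -> R) (x : 'rV[R]_m) : R :=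
  \sum_(l < m) xcomp x l ^+ 2 / lam l.

Definition isC2 (m : nat) (f : 'rV[R]_m -> R) : Prop :=
  [/\ forall p, differentiable f p,
      forall (i : 'I_m) p, differentiable (pd f i) p
    & forall i j : 'I_m, continuous (pd (pd f i) j)].

Definition vf (m : nat) (z : 'rV[R]_m -> 'I_m -> R) (f : 'rV[R]_m -> R)
  : 'rV[R]_m -> R :=
  fun x => \sum_(c < m) z x c * pd f c x.

(* ---- the pairing of indices : 0-based indices 2i and 2i+1 of 'I_(2n)
   (= 1-based indices 2i-1 and 2i) ---- *)
Lemma pfst_proof (n : nat) (i : 'I_n) : (i.*2 < n.*2)%N.
Proof. by rewrite ltn_double. Qed.
Lemma psnd_proof (n : nat) (i : 'I_n) : (i.*2.+1 < n.*2)%N.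
Proof. by rewrite -doubleS leq_double. Qed.
Definition pfst (n : nat) (i : 'I_n) : 'I_(n.*2) := Ordinal (pfst_proof i).
Definition psnd (n : nat) (i : 'I_n) : 'I_(n.*2) := Ordinal (psnd_proof i).

Definition Tfield (N : nat) (lam : 'I_N -> R) (k l m : 'I_N)
  : 'rV[R]_N -> 'I_N -> R :=
  fun x c =>
      (if c == m then xcomp x k * xcomp x l * (lam k)^-1 - xcomp x k * xcomp x l * (lam l)^-1 else 0)
    + (if c == k then xcomp x l * xcomp x m * (lam l)^-1 - xcomp x l * xcomp x m * (lam m)^-1 else 0)
    + (if c == l then xcomp x m * xcomp x k * (lam m)^-1 - xcomp x m * xcomp x k * (lam k)^-1 else 0).

Definition Rfield (n : nat) (i : 'I_n) : 'rV[R]_(n.*2) -> 'I_(n.*2) -> R :=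
  fun x c =>
    (if c == pfst i then xcomp x (psnd i) else 0)
  - (if c == psnd i then xcomp x (pfst i) else 0).

Definition Dop (n : nat) (lam : 'I_(n.*2) -> R) (f : 'rV[R]_(n.*2) -> R)
  : 'rV[R]_(n.*2) -> R :=
  fun x => 2^-1 *
    ( \sum_(k < n.*2) \sum_(l < n.*2) \sum_(m < n.*2 | (lam k < lam l) && (lam l < lam m))
         vf (Tfield lam k l m) (vf (Tfield lam k l m) f) x
    + \sum_(i < n) vf (Rfield i) (vf (Rfield i) f) x ).

Definition Ltil (N : nat) (a : R) (lam del : 'I_N -> R) (f : 'rV[R]_N -> R)
  : 'rV[R]_N -> R :=
  fun x => \sum_(l < N) lam l *
    (a / 2 * (1 + del l) * pd (pd f l) l x - xcomp x l * pd f l x).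

Definition Bop (N : nat) (b : 'rV[R]_N -> 'rV[R]_N) (f : 'rV[R]_N -> R)
  : 'rV[R]_N -> R := vf (fun x l => xcomp (b x) l) f.

Definition Leps (n : nat) (a : R) (lam del : 'I_(n.*2) -> R)
  (b : 'rV[R]_(n.*2) -> 'rV[R]_(n.*2)) (kappa eps : R)
  (f : 'rV[R]_(n.*2) -> R) : 'rV[R]_(n.*2) -> R :=
  fun x => Ltil a lam del f x + eps^-1 * (Bop b f x + kappa * Dop lam f x).

Definition iu : 'I_2 := ord0.
Definition iv : 'I_2 := ord_max.
Definition pt2 (u v : R) : 'rV[R]_2 := \row_(k < 2) (if k == iu then u else v).

End Defs.

From mathcomp Require Import all_boot all_order all_algebra.
From mathcomp Require Import all_classical all_reals all_analysis.
From mathcomp Require Import ring lra.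

Set Implicit Arguments.
Unset Strict Implicit.
Unset Printing Implicit Defensive.

Import Order.TTheory GRing.Theory Num.Theory numFieldNormedType.Exports.
Local Open Scope classical_set_scope.
Local Open Scope ring_scope.

(* The function g depends on x only through u = |x|^2 and v = |x|_{-1}^2, whose
   gradients are 2x and 2 Lambda^{-1} x.  Every field B, T_J, R_i is orthogonal to
   both x and Lambda^{-1} x (for B by hypothesis, for T_J by a cyclic cancellation,
   for R_i because lambda_{2i-1} = lambda_{2i}), so it annihilates g, and so does its
   square: the perturbation eps^{-1} (B + kappa D) vanishes on g.  The formula for
   tilde L g is the chain rule, the two mixed terms psi_uv and psi_vu being merged by
   Schwarz's theorem, proved here from the mean value theorem.  For g_0,
   psi = exp (v / 2a) gives
     tilde L g_0 = e^{v/2a} / 2a * (sum (1+delta)/lambda x^2 + a sum (1+delta) - 2 |x|^2),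
   which is bounded using lambda >= 1 and -1 < delta <= 0. *)

Section Schwarz.
Variables (R : realType) (V : normedModType R).
Implicit Types (f : V -> R) (p u w : V).

Lemma is_derive_along_line f p v t : derivable f (p + t *: v) v ->
  is_derive t 1 (fun s : R => f (p + s *: v)) ('D_v f (p + t *: v)).
Proof.
have quotE : (fun h : R => h^-1 *: (f (p + (h *: 1 + t) *: v) - f (p + t *: v))) =
             (fun h : R => h^-1 *: (f (h *: v + (p + t *: v)) - f (p + t *: v))).
  by apply/funext => h; rewrite scalerDl [h *: 1]mulr1 addrCA addrC.
by move=> df; apply: DeriveDef; rewrite /derivable /derive /= quotE.
Qed.

Definition second_diff f u w p (h : R) :=
  f (p + h *: u + h *: w) - f (p + h *: u) - f (p + h *: w) + f p.

Lemma second_diffC f u w p h : second_diff f u w p h = second_diff f w u p h.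
Proof. by rewrite /second_diff (addrAC p (h *: u)); congr (_ + _); exact: addrAC. Qed.

Lemma second_diff_mvt f u w p h :
  (forall q, derivable f q u) -> (forall q, derivable ('D_u f) q w) -> 0 < h ->
  exists2 xi, xi \in `]0, h[ & exists2 eta, eta \in `]0, h[ &
    second_diff f u w p h = h ^+ 2 * 'D_w ('D_u f) (p + xi *: u + eta *: w).
Proof.
move=> df dDf h0.
pose phi s := f (p + h *: w + s *: u) - f (p + s *: u).
have dphi (t : R) :
    is_derive t 1 phi ('D_u f (p + h *: w + t *: u) - 'D_u f (p + t *: u)).
  by apply: is_deriveB; apply: is_derive_along_line.
have cphi : {within `[0, h], continuous phi}.
  by apply: derivable_within_continuous => t _; case: (dphi t).
have [xi xiI phiE] := MVT h0 (fun t _ => dphi t) cphi.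
pose chi s := 'D_u f (p + xi *: u + s *: w).
have dchi (t : R) : is_derive t 1 chi ('D_w ('D_u f) (p + xi *: u + t *: w)).
  exact: is_derive_along_line.
have cchi : {within `[0, h], continuous chi}.
  by apply: derivable_within_continuous => t _; case: (dchi t).
have [eta etaI chiE] := MVT h0 (fun t _ => dchi t) cchi.
exists xi => //; exists eta => //.
move: phiE chiE; rewrite /phi /chi !scale0r !addr0 subr0 (addrAC p (h *: w)) => phiE chiE.
rewrite (addrAC p (xi *: u)) in chiE.
by rewrite /second_diff expr2 mulrC mulrA -chiE -phiE; ring.
Qed.

Lemma second_diff_cvg f u w p :
  (forall q, derivable f q u) -> (forall q, derivable ('D_u f) q w) ->
  {for p, continuous ('D_w ('D_u f))} ->
  second_diff f u w p h / h ^+ 2 @[h --> 0^'+] --> 'D_w ('D_u f) p.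
Proof.
move=> df dDf cD; apply/cvgrPdist_lt => e e0.
move/cvgrPdist_lt: cD => /(_ e e0)/nbhs_normP[d /= d0 near_p].
have c0 : 0 < `|u| + `|w| + 1 by rewrite ltr_wpDl.
near=> h.
have h0 : 0 < h by near: h; exact: nbhs_right_gt.
have hd : h < d / (`|u| + `|w| + 1).
  by near: h; apply: nbhs_right_lt; rewrite divr_gt0.
have [xi /[!in_itv]/= /andP[xi0 xih] [eta /[!in_itv]/= /andP[eta0 etah] ->]] :=
  second_diff_mvt p df dDf h0.
rewrite mulrAC mulfV ?mul1r ?expf_neq0 ?gt_eqF //; apply: near_p => /=.
rewrite -addrA opprD addrA subrr add0r normrN.
apply: (le_lt_trans (ler_normD _ _)); rewrite !normrZ !gtr0_norm //.
rewrite ltr_pdivlMr // in hd; apply: le_lt_trans hd.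
have := normr_ge0 u; have := normr_ge0 w; nra.
Unshelve. all: by end_near. Qed.

Lemma derive_comm f u w p :
  (forall q, derivable f q u) -> (forall q, derivable f q w) ->
  (forall q, derivable ('D_u f) q w) -> (forall q, derivable ('D_w f) q u) ->
  {for p, continuous ('D_w ('D_u f))} -> {for p, continuous ('D_u ('D_w f))} ->
  'D_w ('D_u f) p = 'D_u ('D_w f) p.
Proof.
move=> du dw duw dwu cuw cwu.
have uw_cvg := second_diff_cvg du duw cuw.
have wu_cvg : second_diff f u w p h / h ^+ 2 @[h --> 0^'+] --> 'D_u ('D_w f) p.
  by under eq_fun do rewrite second_diffC; exact: second_diff_cvg.
exact: cvg_unique uw_cvg wu_cvg.
Qed.

End Schwarz.

Lemma is_derive_comp (R : realType) (U V W : normedModType R) (f : U -> V) (g : V -> W) p v :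
  differentiable f p -> differentiable g (f p) ->
  is_derive p v (g \o f) ('D_('D_v f p) g (f p)).
Proof.
move=> df dg; apply: DeriveDef; first exact/diff_derivable/differentiable_comp.
rewrite deriveE; last exact: differentiable_comp.
by rewrite diff_comp // !deriveE.
Qed.

Section RowCalculus.
Variable R : realType.

Lemma scaleRE (a b : R) : a *: b = a * b. Proof. by []. Qed.

Global Instance is_derive_xcomp m (x v : 'rV[R]_m) k :
  is_derive x v (fun y => xcomp y k) (v ord0 k).
Proof.
have did := @derivable_id R _ x v.
apply: DeriveDef; first exact: (derivable_mxP _ _ _).1 did ord0 k.
by have /(congr1 (fun M : 'rV_m => M ord0 k)) := derive_mx did; rewrite derive_id mxE.
Qed.

Lemma pd_pd_comm m (h : 'rV[R]_m -> R) i j p : isC2 h ->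
  pd (pd h i) j p = pd (pd h j) i p.
Proof.
case=> dh dpdh cpdh; apply: derive_comm => [q|q|q|q||].
- exact: diff_derivable.
- exact: diff_derivable.
- exact: diff_derivable (dpdh i q).
- exact: diff_derivable (dpdh j q).
- exact: cpdh i j p.
- exact: cpdh j i p.
Qed.

Lemma pt2E (u v : R) : pt2 u v = u *: 'e_iu + v *: 'e_iv.
Proof. by apply/rowP => -[[|[|//]] k]; rewrite !mxE /= ?(mulr1, mulr0, addr0, add0r). Qed.

Lemma derive_pt2 (h : 'rV[R]_2 -> R) p (u v : R) : differentiable h p ->
  'D_(pt2 u v) h p = u * pd h iu p + v * pd h iv p.
Proof. by move=> dh; rewrite /pd !deriveE // pt2E linearD !linearZ. Qed.

Lemma is_derive_pt2_comp m (s t : 'rV[R]_m -> R) (h : 'rV[R]_2 -> R) x v :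
  differentiable s x -> differentiable t x -> differentiable h (pt2 (s x) (t x)) ->
  is_derive x v (fun y => h (pt2 (s y) (t y)))
    ('D_v s x * pd h iu (pt2 (s x) (t x)) + 'D_v t x * pd h iv (pt2 (s x) (t x))).
Proof.
move=> ds dt dh; pose Q y := pt2 (s y) (t y).
have dQ : differentiable Q x.
  rewrite (_ : Q = (fun y => s y *: 'e_iu) + (fun y => t y *: 'e_iv)).
    by apply: differentiableD; apply: differentiableZl.
  by apply/funext => y; rewrite /Q pt2E.
have DQ : 'D_v Q x = pt2 ('D_v s x) ('D_v t x).
  rewrite derive_mx; last exact: diff_derivable.
  apply/matrixP => i j; rewrite !mxE.
  by case: ifP => ji; congr ('D_v _ x); apply/funext => y; rewrite /Q mxE ji.
by apply: is_derive_eq (is_derive_comp v dQ dh) _; rewrite DQ derive_pt2.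
Qed.

End RowCalculus.

Section Norms.
Variables (R : realType) (m : nat).
Implicit Types (lam : 'I_m -> R) (x : 'rV[R]_m) (h : 'rV[R]_2 -> R).

Lemma sqnE : @sqn R m = sqnm1 (fun=> 1).
Proof. by apply/funext => x; apply: eq_bigr => l _; rewrite invr1 mulr1. Qed.

Lemma sqnm1_sumE lam :
  sqnm1 lam = \sum_(l < m) ((fun y => xcomp y l) * (fun y => xcomp y l) * cst (lam l)^-1).
Proof. by apply/funext => x; rewrite /sqnm1 fct_sumE; apply: eq_bigr. Qed.

Lemma differentiable_sqnm1 lam x : differentiable (sqnm1 lam) x.
Proof.
rewrite sqnm1_sumE; apply: differentiable_sum => l.
by apply: differentiableM => //; apply: differentiableM; apply: differentiable_coord.
Qed.

Lemma pd_sqnm1 lam k x : pd (sqnm1 lam) k x = 2 * xcomp x k / lam k.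
Proof.
rewrite /pd sqnm1_sumE; apply: derive_val; apply: is_derive_eq.
rewrite (bigD1 k) //= big1 => [|l /negbTE lk]; rewrite !mxE ?eqxx ?lk /cst /=.
  by rewrite scaler0 add0r addr0 !scaleRE; ring.
by rewrite scaler0 add0r !scaleRE !mulr0 addr0 mulr0.
Qed.

Lemma differentiable_sqn x : differentiable (@sqn R m) x.
Proof. by rewrite sqnE; apply: differentiable_sqnm1. Qed.

Lemma pd_sqn k x : pd (@sqn R m) k x = 2 * xcomp x k.
Proof. by rewrite sqnE pd_sqnm1 divr1. Qed.

Definition norms2 lam x : 'rV[R]_2 := pt2 (sqn x) (sqnm1 lam x).

Lemma is_derive_comp_norms2 lam h x k : (forall p, differentiable h p) ->
  is_derive x 'e_k (h \o norms2 lam)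
    (2 * xcomp x k * (pd h iu (norms2 lam x) + pd h iv (norms2 lam x) / lam k)).
Proof.
move=> dh; apply: is_derive_eq.
  by apply: is_derive_pt2_comp => //; [apply: differentiable_sqn | apply: differentiable_sqnm1].
by rewrite -!/(pd _ k x) pd_sqn pd_sqnm1 -/(norms2 lam x); ring.
Qed.

Lemma pd_comp_norms2 lam h k : (forall p, differentiable h p) ->
  pd (h \o norms2 lam) k =
  (cst 2 * (fun y => xcomp y k))
    * (pd h iu \o norms2 lam + (pd h iv \o norms2 lam) * cst (lam k)^-1).
Proof.
move=> dh; apply/funext => x; have Dx := is_derive_comp_norms2 lam x k dh.
by rewrite /pd derive_val !fctE.
Qed.

Lemma pd2_comp_norms2 lam h x k :
  (forall p, differentiable h p) -> (forall i p, differentiable (pd h i) p) ->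
  let P := norms2 lam x in
  pd (pd (h \o norms2 lam) k) k x =
    2 * pd h iu P + 2 * pd h iv P / lam k
    + 4 * xcomp x k ^+ 2 * (pd (pd h iu) iu P
        + (pd (pd h iu) iv P + pd (pd h iv) iu P) / lam k + pd (pd h iv) iv P / lam k ^+ 2).
Proof.
move=> dh dpdh P.
have DU := is_derive_comp_norms2 lam x k (dpdh iu).
have DV := is_derive_comp_norms2 lam x k (dpdh iv).
rewrite {1}/pd pd_comp_norms2 // derive_val !fctE /cst mxE !eqxx !scaler0 add0r addr0.
rewrite !scaleRE -/P -exprVn /=.
move: (xcomp x k) (lam k)^-1 (pd h iu P) (pd h iv P) (pd (pd h iu) iu P)
  (pd (pd h iu) iv P) (pd (pd h iv) iu P) (pd (pd h iv) iv P) => *.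
ring.
Qed.

End Norms.

Section VectorFields.
Variable R : realType.

Definition tangent_norms m (lam : 'I_m -> R) (z : 'rV[R]_m -> 'I_m -> R) : Prop :=
  forall x, \sum_(c < m) z x c * xcomp x c = 0 /\ \sum_(c < m) z x c * xcomp x c / lam c = 0.

Lemma vf_cst m (z : 'rV[R]_m -> 'I_m -> R) (c : R) : vf z (cst c) = cst 0.
Proof.
by apply/funext => x; rewrite /vf big1 // => l _; rewrite /pd derive_cst mulr0.
Qed.

Lemma vf_comp_norms2 m lam (z : 'rV[R]_m -> 'I_m -> R) (h : 'rV[R]_2 -> R) :
  (forall p, differentiable h p) -> tangent_norms lam z -> vf z (h \o norms2 lam) = cst 0.
Proof.
move=> dh tz; apply/funext => x; have [zx zxl] := tz x.
rewrite /vf (_ : \sum_c _ = 2 * pd h iu (norms2 lam x) * \sum_c z x c * xcomp x c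
    + 2 * pd h iv (norms2 lam x) * \sum_c z x c * xcomp x c / lam c).
  by rewrite zx zxl !mulr0 addr0.
rewrite !mulr_sumr -big_split; apply: eq_bigr => c _.
by rewrite pd_comp_norms2 // !fctE /cst /=; ring.
Qed.

Lemma sum_ifeq_mulr (I : finType) (j : I) (A : R) (w : I -> R) :
  \sum_i (if i == j then A else 0) * w i = A * w j.
Proof. by rewrite (bigD1 j) //= eqxx big1 ?addr0 // => i /negbTE ->; rewrite mul0r. Qed.

Lemma Tfield_tangent N (lam : 'I_N -> R) k l m : tangent_norms lam (Tfield lam k l m).
Proof.
move=> x; rewrite /Tfield; split.
  under eq_bigr do rewrite !mulrDl.
  by rewrite !big_split /= !sum_ifeq_mulr; ring.
under eq_bigr do rewrite -mulrA !mulrDl.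
by rewrite !big_split /= !sum_ifeq_mulr; ring.
Qed.

Lemma Rfield_tangent n (lam : 'I_n.*2 -> R) i :
  lam (pfst i) = lam (psnd i) -> tangent_norms lam (Rfield i).
Proof.
move=> lam_i x; rewrite /Rfield; split.
  under eq_bigr do rewrite mulrBl.
  by rewrite sumrB !sum_ifeq_mulr; ring.
under eq_bigr do rewrite -mulrA mulrBl.
by rewrite sumrB !sum_ifeq_mulr lam_i; ring.
Qed.

End VectorFields.

Lemma Ltil_comp_norms2 (R : realType) N (a : R) lam del (psi : 'rV[R]_2 -> R) (x : 'rV[R]_N) :
  isC2 psi -> (forall l, lam l != 0) ->
  let P := norms2 lam x in
  Ltil a lam del (psi \o norms2 lam) x =
    2 * a * ( (\sum_(l < N) lam l * (1 + del l) * xcomp x l ^+ 2) * pd (pd psi iu) iu P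
            + 2 * (\sum_(l < N) (1 + del l) * xcomp x l ^+ 2) * pd (pd psi iu) iv P
            + (\sum_(l < N) (lam l)^-1 * (1 + del l) * xcomp x l ^+ 2) * pd (pd psi iv) iv P)
    + (a * (\sum_(l < N) lam l * (1 + del l)) - 2 * \sum_(l < N) lam l * xcomp x l ^+ 2)
        * pd psi iu P
    + (a * (\sum_(l < N) (1 + del l)) - 2 * \sum_(l < N) xcomp x l ^+ 2) * pd psi iv P.
Proof.
move=> psiC2 lam_neq0 P; have [dpsi dpdpsi _] := psiC2.
rewrite !(mulr_suml, mulr_sumr) -!sumrB -!big_split !(mulr_suml, mulr_sumr) -!big_split.
rewrite /Ltil; apply: eq_bigr => l _.
rewrite pd2_comp_norms2 // pd_comp_norms2 // !fctE /cst /= (pd_pd_comm iv iu P psiC2) -/P.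
have := lam_neq0 l; move: (lam l) (xcomp x l) (del l) (pd psi iu P) (pd psi iv P)
  (pd (pd psi iu) iu P) (pd (pd psi iu) iv P) (pd (pd psi iv) iv P) => *.
by field.
Qed.

Lemma Leps_comp_norms2 (R : realType) n (a : R) lam del (b : 'rV[R]_n.*2 -> 'rV[R]_n.*2)
    kappa eps (psi : 'rV[R]_2 -> R) x :
  (forall p, differentiable psi p) -> tangent_norms lam (fun y l => xcomp (b y) l) ->
  (forall i, lam (pfst i) = lam (psnd i)) ->
  Leps a lam del b kappa eps (psi \o norms2 lam) x = Ltil a lam del (psi \o norms2 lam) x.
Proof.
move=> dpsi b_tan lam_pair.
have vf2_eq0 z : tangent_norms lam z -> vf z (vf z (psi \o norms2 lam)) x = 0.
  by move=> z_tan; rewrite (vf_comp_norms2 dpsi z_tan) vf_cst.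
rewrite /Leps /Bop (vf_comp_norms2 dpsi b_tan) /Dop.
rewrite big1 => [|k _]; last by do 2![apply: big1 => ? _]; apply/vf2_eq0/Tfield_tangent.
rewrite big1 => [|i _]; last exact/vf2_eq0/Rfield_tangent.
by rewrite /cst !(addr0, mulr0).
Qed.

Section ExpCoord.
Variables (R : realType) (m : nat) (c : R) (j : 'I_m).

Lemma differentiable_expR (y : R) : differentiable expR y.
Proof. exact/derivable1_diffP/derivable_expR. Qed.

Lemma derive_expR_dir (d y : R) : 'D_d expR y = d * expR y.
Proof.
have dexp := differentiable_expR y.
by rewrite deriveE // -{1}[d]mulr1 linearZ -deriveE // derive_val.
Qed.

Definition exp_coord (q : 'rV[R]_m) : R := expR (xcomp q j / c).

Let differentiable_exponent q : differentiable (fun q : 'rV[R]_m => xcomp q j / c) q.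
Proof. exact: differentiableM (differentiable_coord q ord0 j) (differentiable_cst c^-1 q). Qed.

Lemma is_derive_exp_coord (q v : 'rV[R]_m) :
  is_derive q v exp_coord (v ord0 j / c * exp_coord q).
Proof.
have Ds : is_derive q v (fun q : 'rV[R]_m => xcomp q j / c) (v ord0 j / c).
  apply: is_derive_eq (is_deriveM (is_derive_xcomp q v j) (is_derive_cst c^-1 q v)) _.
  by rewrite scaler0 add0r [RHS]mulrC.
apply: is_derive_eq.
  exact: is_derive_comp v (differentiable_exponent q) (differentiable_expR _).
by rewrite derive_expR_dir derive_val.
Qed.

Lemma differentiable_exp_coord q : differentiable exp_coord q.
Proof.
exact: differentiable_comp (differentiable_exponent q) (differentiable_expR _).
Qed.

Lemma pd_exp_coord i : pd exp_coord i = cst ((j == i)%:R / c) * exp_coord.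
Proof.
apply/funext => q; have Dq := is_derive_exp_coord q 'e_i.
by rewrite /pd derive_val mxE eqxx !fctE.
Qed.

Lemma pd2_exp_coord i i' :
  pd (pd exp_coord i) i' = cst ((j == i)%:R / c * ((j == i')%:R / c)) * exp_coord.
Proof.
rewrite pd_exp_coord; apply/funext => q; have Dq := is_derive_exp_coord q 'e_i'.
by rewrite /pd derive_val mxE eqxx !fctE scaler0 addr0 scaleRE mulrA.
Qed.

Lemma exp_coord_C2 : isC2 exp_coord.
Proof.
split=> [q|i q|i i' q]; first exact: differentiable_exp_coord.
  by rewrite pd_exp_coord; apply: differentiableM => //; exact: differentiable_exp_coord.
rewrite pd2_exp_coord; apply: differentiable_continuous.
by apply: differentiableM => //; exact: differentiable_exp_coord.
Qed.

End ExpCoord.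

Section Bounds.
Variable R : realType.

Lemma pair_chain_ge1 n (lam : 'I_n.*2 -> R) :
  (forall i : 'I_n, val i = 0%N -> lam (pfst i) = 1) ->
  (forall i : 'I_n, lam (pfst i) = lam (psnd i)) ->
  (forall i j : 'I_n, val j = (val i).+1 -> lam (psnd i) < lam (pfst j)) ->
  forall l, 1 <= lam l.
Proof.
move=> lam1 lam_pair lam_incr.
have lam_fst k (hk : (k < n)%N) : 1 <= lam (pfst (Ordinal hk)).
  elim: k hk => [|k IHk] hk; first by rewrite lam1.
  have hk' := ltnW hk; apply: le_trans (IHk hk') _; rewrite lam_pair ltW //.
  exact: (lam_incr (Ordinal hk') (Ordinal hk)).
move=> l; have hl : (l./2 < n)%N.
  by rewrite -ltn_double (leq_ltn_trans _ (ltn_ord l)) // -{2}(odd_double_half l) leq_addl.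
have [ol|el] := boolP (odd l).
  have -> : l = psnd (Ordinal hl) by apply: val_inj; rewrite /= -{1}(odd_double_half l) ol.
  by rewrite -lam_pair.
have -> : l = pfst (Ordinal hl) by apply: val_inj; rewrite /= -{1}(odd_double_half l) (negbTE el).
exact: lam_fst.
Qed.

Lemma sqn_ge0 m (x : 'rV[R]_m) : 0 <= sqn x.
Proof. by apply: sumr_ge0 => l _; apply: sqr_ge0. Qed.

Lemma sqnm1_le_sqn m (lam : 'I_m -> R) x : (forall l, 1 <= lam l) -> sqnm1 lam x <= sqn x.
Proof.
move=> lam_ge1; apply: ler_sum => l _; rewrite ler_pdivrMr ?ler_peMr ?sqr_ge0 //.
exact: lt_le_trans ltr01 (lam_ge1 l).
Qed.

Lemma affine_expR_bound (a s v N : R) : 0 < a -> 0 <= s -> v <= s -> 0 <= N ->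
  (a * N - s) / (2 * a) * expR (v / (2 * a)) <= N / 2 * expR (N / 2).
Proof.
move=> a0 s0 vs N0; have a20 : 0 < 2 * a by rewrite mulr_gt0.
have aN : a * N = N / 2 * (2 * a) by field.
have [sN|Ns] := leP (a * N) s.
  apply: le_trans (_ : 0 <= _); last by rewrite mulr_ge0 ?expR_ge0 ?divr_ge0.
  by rewrite mulr_le0_ge0 ?expR_ge0 // mulr_le0_ge0 ?subr_le0 // invr_ge0 ltW.
apply: ler_pM; rewrite ?expR_ge0 //.
- by rewrite divr_ge0 ?subr_ge0 ?ltW.
- by rewrite ler_pdivrMr // -aN gerBl.
- by rewrite ler_expR ler_pdivrMr // -aN; apply: le_trans vs (ltW Ns).
Qed.

Lemma Ltil_exp_le N (a : R) (lam del : 'I_N -> R) x :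
  0 < a -> (forall l, 1 <= lam l) -> (forall l, -1 < del l /\ del l <= 0) ->
  Ltil a lam del (exp_coord (2 * a) iv \o norms2 lam) x
    <= (a * N%:R - sqn x) / (2 * a) * expR (sqnm1 lam x / (2 * a)).
Proof.
move=> a0 lam_ge1 del_bds.
have lam_gt0 l : 0 < lam l := lt_le_trans ltr01 (lam_ge1 l).
rewrite Ltil_comp_norms2; [|exact: exp_coord_C2|by move=> l; rewrite lt0r_neq0].
have eE : exp_coord (2 * a) iv (norms2 lam x) = expR (sqnm1 lam x / (2 * a)).
  by rewrite /exp_coord /xcomp mxE.
(* Once exp_coord is abstracted, matching pd-terms below cannot unfold it. *)
move: eE (pd_exp_coord (2 * a) iv) (pd2_exp_coord (2 * a) iv).
move: (exp_coord (2 * a) iv) => e eE pd_e pd2_e.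
have vu : (iv == iu :> 'I_2) = false by [].
rewrite !pd2_e !pd_e !fctE /cst vu eqxx eE -/(sqn x) /=.
set E := expR _; set S3 := \sum_(l < N) (lam l)^-1 * _ * _; set S6 := \sum_(l < N) (1 + _).
have S3_le : S3 <= sqn x.
  apply: ler_sum => l _; have [del_gt del_le] := del_bds l.
  apply: ler_piMl; first exact: sqr_ge0.
  by apply: mulr_ile1; [rewrite invr_ge0 ltW | lra | rewrite invf_le1 | lra].
have S6_le : S6 <= N%:R.
  apply: (@le_trans _ _ (\sum_(l < N) 1)); last by rewrite sumr_const card_ord.
  by apply: ler_sum => l _; have [_ del_le] := del_bds l; rewrite gerDl.
have a_neq0 : a != 0 by rewrite gt_eqF.
rewrite [leLHS](_ : _ = E / (2 * a) * (S3 + a * S6 - 2 * sqn x)); last by field.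
rewrite [leRHS](_ : _ = E / (2 * a) * (a * N%:R - sqn x)); last by field.
apply: ler_wpM2l; first by rewrite divr_ge0 ?expR_ge0 // mulr_ge0 // ltW.
have : a * S6 <= a * N%:R by rewrite ler_pM2l.
lra.
Qed.

End Bounds.

Theorem lemma1p2 (R : realType) (n : nat) (lam del : 'I_(n.*2) -> R)
  (a kappa : R) (b : 'rV[R]_(n.*2) -> 'rV[R]_(n.*2)) :
  (4 <= n)%N ->
  (* 1 = lam_1 = lam_2 < lam_3 = lam_4 < ... < lam_{N-1} = lam_N *)
  (forall i : 'I_n, val i = 0%N -> lam (pfst i) = 1) ->
  (forall i : 'I_n, lam (pfst i) = lam (psnd i)) ->
  (forall i j : 'I_n, val j = (val i).+1 -> lam (psnd i) < lam (pfst j)) ->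
  (* a > 0, delta_l in (-1,0], delta_{2i} = delta_{2i-1} *)
  0 < a ->
  (forall l, -1 < del l /\ del l <= 0) ->
  (forall i : 'I_n, del (pfst i) = del (psnd i)) ->
  (* b : components are quadratic forms, div b = 0, <x,b(x)> = 0 = <x,b(x)>_{-1} *)
  (exists C : 'I_(n.*2) -> 'I_(n.*2) -> 'I_(n.*2) -> R,
     forall x l, xcomp (b x) l =
       \sum_(j < n.*2) \sum_(k < n.*2) C l j k * xcomp x j * xcomp x k) ->
  (forall x, \sum_(l < n.*2) pd (fun y => xcomp (b y) l) l x = 0) ->
  (forall x, \sum_(l < n.*2) xcomp x l * xcomp (b x) l = 0) ->
  (forall x, \sum_(l < n.*2) xcomp x l * xcomp (b x) l / lam l = 0) ->
  (* kappa in (0,1] *)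
  0 < kappa <= 1 ->
  (forall psi : 'rV[R]_2 -> R, isC2 psi ->
     forall eps : R, 0 < eps -> forall x : 'rV[R]_(n.*2),
     let g := fun y => psi (pt2 (sqn y) (sqnm1 lam y)) in
     let P := pt2 (sqn x) (sqnm1 lam x) in
     Leps a lam del b kappa eps g x = Ltil a lam del g x /\
     Ltil a lam del g x =
       2 * a * ( (\sum_(l < n.*2) lam l * (1 + del l) * xcomp x l ^+ 2) * pd (pd psi iu) iu P
               + 2 * (\sum_(l < n.*2) (1 + del l) * xcomp x l ^+ 2) * pd (pd psi iu) iv P
               + (\sum_(l < n.*2) (lam l)^-1 * (1 + del l) * xcomp x l ^+ 2) * pd (pd psi iv) iv P)
       + (a * (\sum_(l < n.*2) lam l * (1 + del l)) - 2 * \sum_(l < n.*2) lam l * xcomp x l ^+ 2)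
           * pd psi iu P
       + (a * (\sum_(l < n.*2) (1 + del l)) - 2 * \sum_(l < n.*2) xcomp x l ^+ 2)
           * pd psi iv P)
  /\
  (forall eps : R, 0 < eps -> forall x : 'rV[R]_(n.*2),
     let g0 := fun y => expR (sqnm1 lam y / (2 * a)) in
     Leps a lam del b kappa eps g0 x
       <= (a * (n.*2)%:R - sqn x) / (2 * a) * expR (sqnm1 lam x / (2 * a)) /\
     (a * (n.*2)%:R - sqn x) / (2 * a) * expR (sqnm1 lam x / (2 * a))
       <= (n.*2)%:R / 2 * expR ((n.*2)%:R / 2)).
Proof.
move=> _ lam1 lam_pair lam_incr a_gt0 del_bds _ _ _ xb0 xbl0 _.
have lam_ge1 := pair_chain_ge1 lam1 lam_pair lam_incr.
have lam_neq0 l : lam l != 0 by rewrite gt_eqF // (lt_le_trans ltr01).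
have b_tan : tangent_norms lam (fun y l => xcomp (b y) l).
  move=> y; split; [rewrite -[RHS](xb0 y) | rewrite -[RHS](xbl0 y)];
    by apply: eq_bigr => l _; rewrite (mulrC (xcomp (b y) l)).
split=> [psi psiC2 eps _ x g P | eps _ x g0].
  have [dpsi _ _] := psiC2.
  by split; [apply: Leps_comp_norms2 | apply: Ltil_comp_norms2].
have -> : g0 = exp_coord (2 * a) iv \o norms2 lam.
  by apply/funext => y; rewrite /g0 /= /exp_coord /xcomp mxE.
rewrite Leps_comp_norms2 //; last exact: differentiable_exp_coord.
split; first exact: Ltil_exp_le.
by apply: affine_expR_bound; rewrite ?sqn_ge0 ?sqnm1_le_sqn ?ler0n.
Qed.
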